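(* Let $\rho$ be a subnormalized state and $\Gamma$ positive semidefinite, let $\mathcal M^\infty$ be as below, $q\ge0$, $\eta\in(0,\operatorname{tr}\rho]$, $g\in(0,1)$. If $\mathcal M^\infty$ is $q$-quasiuniversal with respect to $\Gamma$, then with $\eta_g=(1-g)\eta+g\operatorname{tr}\rho$, $$D^\eta_H(\rho\|\Gamma)\ge D^{\infty,\eta}_H(\rho\|\Gamma)\ge D^{\eta_g}_H(\rho\|\Gamma)-q-\log\frac{\operatorname{tr}\rho}{g\eta}.$$ If $\mathcal M^\infty$ is $q$-quasiuniversal with respect to $\mathbb 1$, then $H^\eta_H(\rho)\le H^{\infty,\eta}_H(\rho)\le H^{\eta_g}_H(\rho)+q+\log\frac{\operatorname{tr}\rho}{g\eta}$.
   Context: Natural logarithms; subnormalized state = positive semidefinite with trace $\le1$; POVM effect = $0\le Q\le\mathbb 1$. $\{\mathcal M^r\}_{r\ge0}$ is a family of sets of POVM effects on the system with $\mathbb 1\in\mathcal M^0$ and $\mathcal M^r\subseteq\mathcal M^{r'}$ for $r\le r'$; $\mathcal M^\infty$ is the topological closure of $\bigcup_{r\ge0}\mathcal M^r$. $D^{\infty,\eta}_H(\rho\|\Gamma)=-\log\inf\{\operatorname{tr}(Q\Gamma)/\operatorname{tr}(Q\rho): Q\in\mathcal M^\infty,\operatorname{tr}(Q\rho)\ge\eta\}$ and $H^{\infty,\eta}_H(\rho)=-D^{\infty,\eta}_H(\rho\|\mathbb 1)$. Hypothesis-testing relative entropy $D^\eta_H(\rho\|\Gamma)=-\log\min\{\operatorname{tr}(Q\Gamma)/\eta: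 0\le Q\le\mathbb 1,\operatorname{tr}(Q\rho)\ge\eta\}$, $H^\eta_H(\rho)=-D^\eta_H(\rho\|\mathbb 1)$. $\mathcal M^\infty$ is $q$-quasiuniversal with respect to $\Gamma$ if for every POVM effect $Q$ with $\|Q\|_\infty=1$ and every $g\in(0,1)$ there exist $\tilde Q,\tilde Q'\in\mathcal M^\infty$ with $g\tilde Q\le Q\le(1-g)\tilde Q'+g\mathbb 1$ and $\log\operatorname{tr}(\tilde Q'\Gamma)-\log\operatorname{tr}(\tilde Q\Gamma)\le q$. *)

From HB Require Import structures.
From mathcomp Require Import all_boot all_order all_algebra.
From mathcomp Require Import complex.
From mathcomp Require Import all_classical all_reals all_analysis.
Set Implicit Arguments. Unset Strict Implicit. Unset Printing Implicit Defensive.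
Import Order.TTheory GRing.Theory Num.Theory.
Local Open Scope ring_scope.
Local Open Scope classical_set_scope.

Section QDefs.
Variables (R : realType) (n : nat).
Local Notation C := (R[i]).
Local Notation mx := ('M[C]_n).

Definition adjmx (m p : nat) (A : 'M[C]_(m, p)) : 'M[C]_(p, m) :=
  map_mx (fun z => (z^*)%C) A^T.

Definition psd (A : mx) : Prop :=
  A = adjmx A /\ forall v : 'cV[C]_n, 0 <= (adjmx v *m A *m v) 0 0.

Definition loewner (A B : mx) : Prop := psd (B - A).

(* real trace (traces below are traces of products of psd operators, hence real) *)
Definition trR (A : mx) : R := complex.Re (\tr A).

Definition subnormalized (rho : mx) : Prop := psd rho /\ trR rho <= 1.

Definition effect (Q : mx) : Prop := psd Q /\ loewner Q 1%:M.

Definition cabs (z : C) : R := Num.sqrt (complex.Re z ^+ 2 + complex.Im z ^+ 2).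

Definition vnorm (v : 'cV[C]_n) : R := Num.sqrt (\sum_i cabs (v i 0) ^+ 2).

Definition opnorm (Q : mx) : R :=
  sup [set vnorm (Q *m v) | v in [set v : 'cV[C]_n | vnorm v = 1]].

Definition mx_closure (S : set mx) : set mx :=
  [set Q | forall e : R, 0 < e ->
     exists2 Q', S Q' & forall i j, cabs (Q i j - Q' i j) < e].

Definition Minf (M : R -> set mx) : set mx :=
  mx_closure (\bigcup_(r in [set r : R | 0 <= r]) M r).

Definition nlog (x : R) : \bar R := if x == 0 then +oo%E else (- ln x)%:E.
Definition elog (x : R) : \bar R := if x == 0 then -oo%E else (ln x)%:E.

Definition DH (eta : R) (rho Gam : mx) : \bar R :=
  nlog (inf [set trR (Q *m Gam) / eta | Q in
              [set Q | effect Q /\ eta <= trR (Q *m rho)]]).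

Definition DHinf (M : R -> set mx) (eta : R) (rho Gam : mx) : \bar R :=
  nlog (inf [set trR (Q *m Gam) / trR (Q *m rho) | Q in
              [set Q | Minf M Q /\ eta <= trR (Q *m rho)]]).

Definition HH (eta : R) (rho : mx) : \bar R := (- DH eta rho 1%:M)%E.
Definition HHinf (M : R -> set mx) (eta : R) (rho : mx) : \bar R :=
  (- DHinf M eta rho 1%:M)%E.

Definition quasiuniversal (M : R -> set mx) (q : R) (Gam : mx) : Prop :=
  forall Q : mx, effect Q -> opnorm Q = 1 ->
  forall g : R, 0 < g < 1 ->
  exists Qt Qt' : mx,
    [/\ Minf M Qt, Minf M Qt',
        loewner (g%:C%C *: Qt) Q,
        loewner Q ((1 - g)%:C%C *: Qt' + g%:C%C *: 1%:M)
      & (elog (trR (Qt' *m Gam)) - elog (trR (Qt *m Gam)) <= q%:E)%E].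

End QDefs.

(* A test [Q] of [M^oo] with [tr (Q rho) >= eta], rescaled
   by [eta / tr (Q rho)], is an effect feasible for [D^eta_H] with the same ratio, whence the
   first inequality.  Conversely, let [Q] be an effect with [tr (Q rho) >= eta_g] and [m <= 1] its
   largest eigenvalue.  Quasiuniversality applied to [Q / m] yields [Qt, Qt'] in [M^oo] with
   [g Qt <= Q / m <= (1 - g) Qt' + g] and [tr (Qt' Gam) <= e^q tr (Qt Gam)].  The upper sandwich
   forces [tr (Qt' rho) >= eta]; the lower one, with [m >= eta_g / tr rho], bounds [tr (Qt' Gam)]
   by [e^q (tr rho / eta_g) tr (Q Gam) / g].  The entropic statements are the case [Gam = 1]. *)

From HB Require Import structures.
From mathcomp Require Import all_boot all_order all_algebra.
From mathcomp Require Import complex spectral sesquilinear ring lra.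
From mathcomp Require Import all_classical all_reals all_analysis.
Import Order.TTheory GRing.Theory Num.Theory.
Local Open Scope ring_scope.
Local Open Scope classical_set_scope.
Set Implicit Arguments. Unset Strict Implicit.

Local Notation "x %:CC" := (real_complex _ x) (at level 2).

Section HermitianMatrices.
Variables (R : realType) (n : nat).
Local Notation C := (R[i]).
Local Notation mx := ('M[C]_n).

Lemma adjmxE m p (A : 'M[C]_(m, p)) : adjmx A = (A ^t Num.conj)%sesqui.
Proof. by []. Qed.

Lemma adjmxM m p r (A : 'M[C]_(m, p)) (B : 'M[C]_(p, r)) :
  adjmx (A *m B) = adjmx B *m adjmx A.
Proof. by rewrite !adjmxE trmx_mul map_mxM. Qed.

Lemma adjmxK m p (A : 'M[C]_(m, p)) : adjmx (adjmx A) = A.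
Proof. by rewrite !adjmxE trmxCK. Qed.

Lemma adjmx_row1 k : adjmx (row k (1%:M : mx)) = col k 1%:M.
Proof.
rewrite adjmxE; apply/matrixP=> i j; rewrite !mxE eq_sym.
by case: (i == k); rewrite ?conjC1 ?conjC0.
Qed.

Lemma adjmx_diag_ge0 (d : 'rV[C]_n) : (forall k, 0 <= d 0 k) ->
  adjmx (diag_mx d) = diag_mx d.
Proof.
move=> d_ge0; rewrite adjmxE; apply/matrixP=> i j; rewrite !mxE.
have [->|ne] := eqVneq i j; last by rewrite /= mulr0n conjC0.
by rewrite /= mulr1n; apply/conj_Creal/ger0_real.
Qed.

Lemma quad_diagE (d : 'rV[C]_n) (w : 'cV[C]_n) :
  (adjmx w *m diag_mx d *m w) 0 0 = \sum_k (w k 0)^* * d 0 k * w k 0.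
Proof. by rewrite mul_mx_diag !mxE; apply: eq_bigr => k _; rewrite !mxE. Qed.

Lemma quad_row1E (A : mx) k :
  (row k (1%:M : mx) *m A *m adjmx (row k (1%:M : mx))) 0 0 = A k k.
Proof. by rewrite -row_mul mul1mx adjmx_row1 colE mul1mx -colE !mxE. Qed.

Lemma hermitian_unitary_diag (A : mx) : A = adjmx A ->
  exists (P : mx) (d : 'rV[C]_n),
  [/\ P *m adjmx P = 1%:M, adjmx P *m P = 1%:M & A = adjmx P *m diag_mx d *m P].
Proof.
move=> A_herm.
have A_normal : A \is normalmx.
  by apply/hermitian_normalmx/is_hermitianmxP; rewrite expr0 scale1r.
have /orthomx_spectralP A_spectral := A_normal.
have P_unitary := spectral_unitarymx A.
exists (spectralmx A), (spectral_diag A); split.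
- exact/unitarymxP.
- by rewrite adjmxE -invmx_unitary // mulVmx // spectral_unit.
- by rewrite adjmxE -invmx_unitary.
Qed.

Lemma psd_unitary_diag (P : mx) (d : 'rV[C]_n) : (forall k, 0 <= d 0 k) ->
  psd (adjmx P *m diag_mx d *m P).
Proof.
move=> d_ge0; split; first by rewrite !adjmxM adjmxK adjmx_diag_ge0 // mulmxA.
move=> v; rewrite -!mulmxA mulmxA -adjmxM mulmxA quad_diagE.
apply: sumr_ge0 => k _; rewrite mulrC mulrA mulr_ge0 //.
by rewrite -normCK exprn_ge0.
Qed.

Lemma psd_unitary_diag_ge0 (A P : mx) d : psd A -> P *m adjmx P = 1%:M ->
  A = adjmx P *m diag_mx d *m P -> forall k, 0 <= d 0 k.
Proof.
move=> [_ A_ge0] P_unitary A_diag k.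
have := A_ge0 (adjmx (row k P)).
have Pk : P *m adjmx (row k P) = adjmx (row k 1%:M).
  by rewrite -[P in P *m _]adjmxK -adjmxM -row_mul P_unitary.
rewrite adjmxK A_diag !mulmxA -row_mul P_unitary -mulmxA Pk quad_row1E.
by rewrite mxE eqxx mulr1n.
Qed.

(* Diagonalising [A = P^* D P] gives [tr (X A) = sum_k d_k <P_k, X P_k>]. *)
Lemma mxtrace_psd_mul_ge0 (X A : mx) : psd X -> psd A -> 0 <= \tr (X *m A).
Proof.
move=> X_psd A_psd; have [P [d [P_unitary _ A_diag]]] := hermitian_unitary_diag A_psd.1.
have d_ge0 := psd_unitary_diag_ge0 A_psd P_unitary A_diag.
rewrite A_diag !mulmxA mxtrace_mulC !mulmxA mul_mx_diag.
apply: sumr_ge0 => k _; rewrite mxE mulr_ge0 //.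
rewrite -quad_row1E -!mulmxA -adjmxM !mulmxA -row_mul mul1mx.
by have := X_psd.2 (adjmx (row k P)); rewrite adjmxK.
Qed.

End HermitianMatrices.

Section Effects.
Variables (R : realType) (n : nat).
Local Notation C := (R[i]).
Local Notation mx := ('M[C]_n).

Lemma ge0_ReE (z : C) : 0 <= z -> z = (complex.Re z)%:CC.
Proof. by case: z => a b; rewrite lecE /= => /andP[/eqP ->]. Qed.

Lemma trR_psd_mul_ge0 (X A : mx) : psd X -> psd A -> 0 <= trR (X *m A).
Proof. by move=> X_psd A_psd; have := mxtrace_psd_mul_ge0 X_psd A_psd; rewrite lecE => /andP[]. Qed.

Lemma trR_mulDl (A B X : mx) : trR ((A + B) *m X) = trR (A *m X) + trR (B *m X).
Proof. by rewrite /trR mulmxDl mxtraceD raddfD. Qed.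

Lemma trR_mulBl (A B X : mx) : trR ((A - B) *m X) = trR (A *m X) - trR (B *m X).
Proof. by rewrite /trR mulmxBl mxtraceD raddfN raddfD raddfN. Qed.

Lemma trR_mulZl (r : R) (A X : mx) : trR ((r%:CC *: A) *m X) = r * trR (A *m X).
Proof. by rewrite /trR -scalemxAl mxtraceZ; case: (\tr _) => a b /=; rewrite mul0r subr0. Qed.

Lemma loewner_trR_mul (A B X : mx) : loewner A B -> psd X ->
  trR (A *m X) <= trR (B *m X).
Proof. by move=> AB X_psd; have := trR_psd_mul_ge0 AB X_psd; rewrite trR_mulBl subr_ge0. Qed.

Lemma psd1 : psd (1%:M : mx).
Proof.
split; first by rewrite adjmxE trmx1 map_mx1.
move=> v; rewrite mulmx1 mxE; apply: sumr_ge0 => i _.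
by rewrite adjmxE !mxE mulrC -normCK exprn_ge0.
Qed.

Lemma psd0 : psd (0 : mx).
Proof.
split; first by rewrite adjmxE trmx0 map_mx0.
by move=> v; rewrite mulmx0 mul0mx mxE.
Qed.

Lemma effect1 : effect (1%:M : mx).
Proof. by split; [exact: psd1 | rewrite /loewner subrr; exact: psd0]. Qed.

Lemma scalar_sub_unitary_diag (P : mx) (f : 'I_n -> R) c : adjmx P *m P = 1%:M ->
  c%:CC *: 1%:M - adjmx P *m diag_mx (\row_k (f k)%:CC) *m P
  = adjmx P *m diag_mx (\row_k (c - f k)%:CC) *m P.
Proof.
move=> P_unitary.
have -> : \row_k (c - f k)%:CC = c%:CC *: const_mx 1 - \row_k (f k)%:CC :> 'rV[C]_n.
  by apply/rowP => k; rewrite !mxE rmorphB /= mulr1.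
rewrite linearB linearZ /= diag_const_mx mulmxBr mulmxBl.
by rewrite -scalemxAr mulmx1 -scalemxAl P_unitary.
Qed.

Lemma scale_unitary_diag (P : mx) (e : 'I_n -> R) c :
  c%:CC *: (adjmx P *m diag_mx (\row_k (e k)%:CC) *m P)
  = adjmx P *m diag_mx (\row_k (c * e k)%:CC) *m P.
Proof.
rewrite scalemxAl scalemxAr; congr (_ *m _ *m _).
by rewrite -linearZ /=; congr diag_mx; apply/rowP => k; rewrite !mxE rmorphM.
Qed.

Lemma effect_unitary_diag (P : mx) (e : 'I_n -> R) : adjmx P *m P = 1%:M ->
  (forall k, 0 <= e k <= 1) -> effect (adjmx P *m diag_mx (\row_k (e k)%:CC) *m P).
Proof.
move=> P_unitary e01; split.
  by apply: psd_unitary_diag => k; rewrite mxE ler0c; case/andP: (e01 k).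
rewrite /loewner -[1%:M]scale1r -(rmorph1 (real_complex R)) scalar_sub_unitary_diag //.
by apply: psd_unitary_diag => k; rewrite mxE ler0c subr_ge0; case/andP: (e01 k).
Qed.

Lemma effect_spectral (Q : mx) : effect Q -> exists (P : mx) (e : 'I_n -> R),
  [/\ P *m adjmx P = 1%:M, adjmx P *m P = 1%:M,
      Q = adjmx P *m diag_mx (\row_k (e k)%:CC) *m P
    & forall k, 0 <= e k <= 1].
Proof.
move=> [Q_psd Q_le1].
have [P [d [P_unitary P_unitary' Q_diag]]] := hermitian_unitary_diag Q_psd.1.
have d_ge0 := psd_unitary_diag_ge0 Q_psd P_unitary Q_diag.
have d_real : d = \row_k (complex.Re (d 0 k))%:CC.
  by apply/rowP => k; rewrite mxE -ge0_ReE.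
exists P, (fun k => complex.Re (d 0 k)); split => //; first by rewrite -d_real.
move=> k; apply/andP; split; first by have := d_ge0 k; rewrite lecE => /andP[].
have sub_diag : (1%:M : mx) - Q = adjmx P *m diag_mx (const_mx 1 - d) *m P.
  by rewrite linearB /= diag_const_mx mulmxBr mulmxBl mulmx1 P_unitary' Q_diag.
have := psd_unitary_diag_ge0 Q_le1 P_unitary sub_diag k.
by rewrite !mxE lecE => /andP[_] /=; rewrite raddfB /= subr_ge0.
Qed.

Lemma effectZ (Q : mx) c : effect Q -> 0 <= c <= 1 -> effect (c%:CC *: Q).
Proof.
move=> Q_effect /andP[c_ge0 c_le1].
have [P [e [_ P_unitary -> e01]]] := effect_spectral Q_effect.
rewrite scale_unitary_diag; apply: effect_unitary_diag => // k.
by case/andP: (e01 k) => e_ge0 e_le1; rewrite mulr_ge0 ?mulr_ile1.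
Qed.

End Effects.

Section OperatorNorm.
Variables (R : realType) (n : nat).
Local Notation C := (R[i]).
Local Notation mx := ('M[C]_n).

Definition sqnorm (u : 'cV[C]_n) : R := \sum_i cabs (u i 0) ^+ 2.

Lemma sqnormE u : (sqnorm u)%:CC = (adjmx u *m u) 0 0.
Proof.
rewrite /sqnorm mxE rmorph_sum; apply: eq_bigr => i _.
by rewrite rmorphXn /= adjmxE !mxE -normc_def normCKC.
Qed.

Lemma sqnorm_ge0 u : 0 <= sqnorm u.
Proof. by apply: sumr_ge0 => i _; rewrite exprn_ge0 ?sqrtr_ge0. Qed.

Lemma vnorm_eq1 u : (vnorm u = 1) <-> (sqnorm u = 1).
Proof.
rewrite /vnorm -/(sqnorm u); split; last by move=> ->; rewrite sqrtr1.
by move=> u1; rewrite -(sqr_sqrtr (sqnorm_ge0 u)) u1 expr1n.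
Qed.

Lemma vnorm_le1 u : sqnorm u <= 1 -> vnorm u <= 1.
Proof. by move=> u_le1; rewrite /vnorm -/(sqnorm u) -sqrtr1 ler_sqrt. Qed.

Lemma sqnorm_unitary (P : mx) v : adjmx P *m P = 1%:M -> sqnorm (P *m v) = sqnorm v.
Proof.
move=> P_unitary; apply: (@complexI R); rewrite !sqnormE adjmxM.
by rewrite mulmxA -[adjmx v *m _ *m P]mulmxA P_unitary mulmx1.
Qed.

Section UnitaryDiagonal.
Variables (P : mx) (e : 'I_n -> R).
Hypotheses (P_unitary : P *m adjmx P = 1%:M) (P_unitary' : adjmx P *m P = 1%:M).
Hypothesis e01 : forall k, 0 <= e k <= 1.
Local Notation Q := (adjmx P *m diag_mx (\row_k (e k)%:CC) *m P).

Lemma sqnorm_unitary_diagE v :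
  (sqnorm (Q *m v))%:CC = \sum_k (e k ^+ 2)%:CC * ((P *m v) k 0)^* * ((P *m v) k 0).
Proof.
rewrite sqnormE; set D := diag_mx _.
have Q_herm : adjmx Q = Q.
  suff [<- _] : psd Q by [].
  by apply: psd_unitary_diag => k; rewrite mxE ler0c; case/andP: (e01 k).
have -> : adjmx (Q *m v) *m (Q *m v) = adjmx (P *m v) *m (D *m D) *m (P *m v).
  rewrite adjmxM Q_herm !adjmxM !mulmxA; congr (_ *m _).
  by rewrite -!mulmxA; do 3 congr (_ *m _); rewrite !mulmxA P_unitary mul1mx.
rewrite mulmx_diag quad_diagE; apply: eq_bigr => k _.
by rewrite !mxE rmorphXn /= expr2 [_^* * _]mulrC.
Qed.

Lemma sqnorm_unitary_diag_le v : sqnorm (Q *m v) <= sqnorm v.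
Proof.
rewrite -lecR sqnorm_unitary_diagE -(sqnorm_unitary v P_unitary') sqnormE mxE.
apply: ler_sum => k _; rewrite adjmxE !mxE -mulrA.
apply: ler_piMl; first by rewrite -normCKC exprn_ge0.
by rewrite -(rmorph1 (real_complex R)) lecR; case/andP: (e01 k) => *; apply: exprn_ile1.
Qed.

Lemma unitary_diag_eigvec k :
  sqnorm (adjmx (row k P)) = 1 /\ Q *m adjmx (row k P) = (e k)%:CC *: adjmx (row k P).
Proof.
have Pk : P *m adjmx (row k P) = col k 1%:M.
  by rewrite -[P in P *m _]adjmxK -adjmxM -row_mul P_unitary adjmx_row1.
split.
  apply: (@complexI R); rewrite sqnormE adjmxK rmorph1.
  rewrite -[X in row k X *m _]mul1mx row_mul -mulmxA Pk -adjmx_row1.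
  by rewrite -{1}[row k 1%:M]mulmx1 quad_row1E mxE eqxx.
rewrite -mulmxA Pk -mulmxA.
have -> : diag_mx (\row_k (e k)%:CC) *m col k (1%:M : mx) = (e k)%:CC *: col k 1%:M.
  apply/matrixP => i j; rewrite mul_diag_mx !mxE.
  by case: (eqVneq i k) => [->|]; rewrite ?mulr1 ?mulr0.
by rewrite -scalemxAr -adjmx_row1 -adjmxM -row_mul mul1mx.
Qed.

Lemma opnorm_unitary_diag k0 : e k0 = 1 -> opnorm Q = 1.
Proof.
move=> ek0; rewrite /opnorm; set S := [set _ | _ in _].
have S1 : S 1.
  have [k0_unit k0_eig] := unitary_diag_eigvec k0.
  exists (adjmx (row k0 P)); first exact/vnorm_eq1.
  by rewrite k0_eig ek0 rmorph1 scale1r; apply/vnorm_eq1.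
have S_le1 : ubound S 1.
  move=> _ [v /vnorm_eq1 v1 <-]; apply: vnorm_le1.
  by rewrite -v1 sqnorm_unitary_diag_le.
apply/le_anti/andP; split; first by apply: ge_sup => //; exists 1.
by apply: ub_le_sup => //; exists 1.
Qed.

End UnitaryDiagonal.

(* Dividing by the largest eigenvalue [m] yields an effect of operator norm one. *)
Lemma effect_normalize (Q rho : mx) : effect Q -> 0 < trR (Q *m rho) ->
  exists m : R, [/\ 0 < m <= 1, effect (m^-1%:CC *: Q),
     opnorm (m^-1%:CC *: Q) = 1 & loewner Q (m%:CC *: 1%:M)].
Proof.
move=> Q_effect trQ_gt0.
have [P [e [P_unitary P_unitary' Q_diag e01]]] := effect_spectral Q_effect.
have e_ge0 k : 0 <= e k by case/andP: (e01 k).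
have [k0 _ | n0] := pickP (fun _ : 'I_n => true); last first.
  by move: trQ_gt0; rewrite /trR /mxtrace big_pred0 // ltxx.
have [km _ e_max] := @arg_maxP _ _ _ k0 xpredT e isT.
set m := e km in e_max; have {}e_max k : e k <= m by exact: e_max.
have m_gt0 : 0 < m.
  rewrite lt_def e_ge0 andbT; apply/eqP => m0.
  have e0 : \row_k (e k)%:CC = 0 :> 'rV[C]_n.
    apply/rowP => k; rewrite !mxE.
    by have -> : e k = 0 by apply/le_anti; rewrite e_ge0 -m0 e_max.
  by move: trQ_gt0; rewrite Q_diag e0 linear0 mulmx0 !mul0mx /trR mxtrace0 ltxx.
have m_le1 : m <= 1 by case/andP: (e01 km).
have em01 k : 0 <= m^-1 * e k <= 1.
  apply/andP; split; first by rewrite mulr_ge0 // invr_ge0 ltW.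
  by rewrite mulrC ler_pdivrMr // mul1r.
exists m; split.
- by rewrite m_gt0 m_le1.
- by rewrite Q_diag scale_unitary_diag; apply: effect_unitary_diag.
- rewrite Q_diag scale_unitary_diag; apply: (opnorm_unitary_diag P_unitary P_unitary' em01 (k0 := km)).
  by rewrite mulVf // gt_eqF.
- rewrite /loewner Q_diag scalar_sub_unitary_diag //.
  by apply: psd_unitary_diag => k; rewrite mxE ler0c subr_ge0.
Qed.

End OperatorNorm.

Section Closure.
Variables (R : realType) (n : nat).
Local Notation C := (R[i]).
Local Notation mx := ('M[C]_n).

Lemma cabsE (z : C) : (cabs z)%:CC = `|z|.
Proof. by rewrite normc_def. Qed.

Lemma cabs_ge0 (z : C) : 0 <= cabs z.
Proof. exact: sqrtr_ge0. Qed.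

Lemma cabs_distC (x y : C) : cabs (x - y) = cabs (y - x).
Proof. by apply: (@complexI R); rewrite !cabsE distrC. Qed.

Lemma cabs_Re (z : C) : `|complex.Re z| <= cabs z.
Proof. by rewrite /cabs -sqrtr_sqr ler_sqrt ?lerDl ?addr_ge0 ?sqr_ge0. Qed.

Lemma cabs_Im (z : C) : `|complex.Im z| <= cabs z.
Proof. by rewrite /cabs -sqrtr_sqr ler_sqrt ?lerDr ?addr_ge0 ?sqr_ge0. Qed.

Lemma cabs_le_eq0 (z : C) : (forall e, 0 < e -> cabs z <= e) -> z = 0.
Proof.
move=> z_small; apply/normr0_eq0; rewrite -cabsE.
suff -> : cabs z = 0 by rewrite rmorph0.
apply/le_anti; rewrite cabs_ge0 andbT; apply/ler_addgt0Pr => e e_gt0.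
by rewrite add0r z_small.
Qed.

Lemma approx_ge0_ge0 (z : C) :
  (forall e, 0 < e -> exists2 w : C, 0 <= w & cabs (z - w) <= e) -> 0 <= z.
Proof.
move=> z_approx; rewrite lecE; apply/andP; split.
  suff -> : complex.Im z = 0 by [].
  apply/normr0_eq0/le_anti; rewrite normr_ge0 andbT.
  apply/ler_addgt0Pr => e e_gt0; rewrite add0r.
  have [w w_ge0 zw_le] := z_approx e e_gt0.
  move: w_ge0; rewrite lecE => /andP[/eqP Imw0 _].
  have -> : complex.Im z = complex.Im (z - w) by rewrite raddfB /= Imw0 subr0.
  by apply: le_trans zw_le; apply: cabs_Im.
rewrite -oppr_le0; apply/ler_addgt0Pr => e e_gt0; rewrite add0r.
have [w w_ge0 zw_le] := z_approx e e_gt0.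
move: w_ge0; rewrite lecE => /andP[_ Rew_ge0].
apply: le_trans zw_le; apply: le_trans (cabs_Re _); rewrite raddfB /=.
by rewrite ler_normr; apply/orP; right; move: Rew_ge0 => /=; lra.
Qed.

Lemma cabs_quad_le (v : 'cV[C]_n) (D : mx) (e : R) :
  (forall i j, cabs (D i j) <= e) ->
  cabs ((adjmx v *m D *m v) 0 0) <= e * (\sum_i cabs (v i 0)) ^+ 2.
Proof.
move=> D_small; rewrite -lecR cabsE rmorphM rmorphXn rmorph_sum /=.
under eq_bigr do rewrite cabsE.
rewrite mxE expr2 mulrA mulr_sumr; apply: le_trans (ler_norm_sum _ _ _) _.
apply: ler_sum => j _; rewrite normrM mxE ler_wpM2r // mulr_sumr.
apply: le_trans (ler_norm_sum _ _ _) _; apply: ler_sum => i _.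
rewrite normrM adjmxE !mxE norm_conjC mulrC ler_wpM2r //.
by rewrite -cabsE lecR.
Qed.

Lemma mx_closure_psd (S : set mx) (Q : mx) : S `<=` @psd R n -> mx_closure S Q -> psd Q.
Proof.
move=> S_psd Q_lim; split.
  apply/matrixP => i j; rewrite adjmxE !mxE.
  apply/eqP; rewrite -subr_eq0; apply/eqP/cabs_le_eq0 => e e_gt0.
  have [Q' /S_psd [Q'_herm _] Q'_near] := Q_lim _ (divr_gt0 e_gt0 (ltr0Sn _ 1)).
  have Q'_ij : Q' i j = (Q' j i)^* by rewrite {1}Q'_herm adjmxE !mxE.
  have -> : Q i j - (Q j i)^* = (Q i j - Q' i j) - (Q j i - Q' j i)^*.
    by rewrite rmorphB /= Q'_ij; ring.
  rewrite -lecR cabsE; apply: le_trans (ler_normB _ _) _.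
  rewrite norm_conjC -!cabsE -rmorphD lecR (splitr e).
  by rewrite lerD // ltW.
move=> v; set K := (\sum_i cabs (v i 0)) ^+ 2.
have K_ge0 : 0 <= K by apply/exprn_ge0/sumr_ge0 => i _; apply: cabs_ge0.
have K1_gt0 : 0 < K + 1 by rewrite ltr_wpDl.
apply: approx_ge0_ge0 => e e_gt0.
have [Q' /S_psd [_ Q'_ge0] Q'_near] := Q_lim _ (divr_gt0 e_gt0 K1_gt0).
exists ((adjmx v *m Q' *m v) 0 0) => //.
have -> : (adjmx v *m Q *m v) 0 0 - (adjmx v *m Q' *m v) 0 0
   = (adjmx v *m (Q - Q') *m v) 0 0.
  rewrite mulmxBr mulmxBl; set A := adjmx v *m Q *m v; set B := adjmx v *m Q' *m v.
  by rewrite !mxE.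
apply: le_trans (cabs_quad_le (e := e / (K + 1)) _ _) _.
  by move=> i j; rewrite !mxE ltW.
by rewrite mulrAC ler_pdivrMr // ler_wpM2l ?lerDl ?ltW.
Qed.

Lemma mx_closure_effect (S : set mx) (Q : mx) :
  S `<=` @effect R n -> mx_closure S Q -> effect Q.
Proof.
move=> S_effect Q_lim; split.
  by apply: (mx_closure_psd (S := S)) => // X /S_effect[].
apply: (mx_closure_psd (S := [set 1%:M - X | X in S])).
  by move=> _ [X /S_effect [_ X_le1] <-].
move=> e e_gt0; have [Q' Q'_S Q'_near] := Q_lim e e_gt0.
exists (1%:M - Q'); first by exists Q'.
move=> i j; rewrite !mxE.
have -> : (i == j)%:R - Q i j - ((i == j)%:R - Q' i j) = Q' i j - Q i j :> C by ring.
by rewrite cabs_distC.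
Qed.

Lemma Minf_effect (M : R -> set mx) :
  (forall r : R, 0 <= r -> M r `<=` @effect R n) -> Minf M `<=` @effect R n.
Proof.
move=> M_effect Q; apply: mx_closure_effect => X [r r_ge0].
exact: M_effect.
Qed.

Lemma Minf1 (M : R -> set mx) : M 0 1%:M -> Minf M 1%:M.
Proof.
move=> M0_1 e e_gt0; exists 1%:M; first by exists 0 => //=.
have cabs0 : cabs (0 : C) = 0 by apply: (@complexI R); rewrite cabsE normr0 rmorph0.
by move=> i j; rewrite subrr cabs0.
Qed.

End Closure.

Section HypothesisTesting.
Variables (R : realType) (n : nat).
Local Notation C := (R[i]).
Local Notation mx := ('M[C]_n).
Variables (M : R -> set mx) (rho Gam : mx).
Hypothesis M_effect : forall r : R, 0 <= r -> M r `<=` @effect R n.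
Hypotheses (rho_psd : psd rho) (Gam_psd : psd Gam).

Definition DH_ratios (eta : R) : set R :=
  [set trR (Q *m Gam) / eta | Q in [set Q | effect Q /\ eta <= trR (Q *m rho)]].

Definition DHinf_ratios (eta : R) : set R :=
  [set trR (Q *m Gam) / trR (Q *m rho) | Q in [set Q | Minf M Q /\ eta <= trR (Q *m rho)]].

Lemma DH_ratios_ge0 eta : 0 < eta -> lbound (DH_ratios eta) 0.
Proof.
move=> eta_gt0 _ [Q [Q_effect _] <-].
by rewrite divr_ge0 ?trR_psd_mul_ge0 ?ltW //; case: Q_effect.
Qed.

Lemma DH_ratios_neq0 eta : eta <= trR rho -> DH_ratios eta !=set0.
Proof.
move=> eta_le; exists (trR (1%:M *m Gam) / eta), 1%:M => //.
by split; [exact: effect1 | rewrite mul1mx].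
Qed.

Lemma DHinf_ratios_ge0 eta : 0 < eta -> lbound (DHinf_ratios eta) 0.
Proof.
move=> eta_gt0 _ [Q [/(Minf_effect M_effect) [Q_psd _] eta_le] <-].
by rewrite divr_ge0 ?trR_psd_mul_ge0 // ltW // (lt_le_trans eta_gt0).
Qed.

Lemma DHinf_ratios_neq0 eta : M 0 1%:M -> eta <= trR rho -> DHinf_ratios eta !=set0.
Proof.
move=> M0_1 eta_le; eexists; exists 1%:M => //.
by split; [exact: Minf1 | rewrite mul1mx].
Qed.

Lemma ler_nlog (x y : R) : 0 <= x -> x <= y -> (nlog y <= nlog x)%E.
Proof.
move=> x_ge0 xy; rewrite /nlog; have [_|x_neq0] := eqVneq x 0; first by rewrite leey.
have x_gt0 : 0 < x by rewrite lt_def x_neq0 x_ge0.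
by rewrite gt_eqF ?(lt_le_trans x_gt0) // lee_fin lerN2 ler_ln // posrE (lt_le_trans x_gt0).
Qed.

Lemma DHinf_le_DH eta : M 0 1%:M -> 0 < eta -> eta <= trR rho ->
  (DHinf M eta rho Gam <= DH eta rho Gam)%E.
Proof.
move=> M0_1 eta_gt0 eta_le; apply: ler_nlog.
  by apply: lb_le_inf; [exact: DH_ratios_neq0 | exact: DH_ratios_ge0].
apply: lb_le_inf; first exact: DHinf_ratios_neq0.
move=> _ [Q [Q_Minf eta_leQ] <-].
have trQ_gt0 : 0 < trR (Q *m rho) by apply: lt_le_trans eta_leQ.
set c := eta / trR (Q *m rho).
have c01 : 0 <= c <= 1.
  by apply/andP; split; [rewrite divr_ge0 ?ltW | rewrite ler_pdivrMr // mul1r].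
have := ge_inf (ex_intro _ 0 (DH_ratios_ge0 eta_gt0)); apply.
exists (c%:CC *: Q).
  split; first exact: effectZ (Minf_effect M_effect Q_Minf) c01.
  by rewrite trR_mulZl /c divfK ?gt_eqF.
by rewrite trR_mulZl /c; field; rewrite !gt_eqF.
Qed.

Lemma elog_sub_le (a a' q : R) : 0 <= a -> 0 <= a' ->
  (elog a' - elog a <= q%:E)%E -> a' <= expR q * a.
Proof.
move=> a_ge0 a'_ge0; rewrite /elog.
have [-> _|a'_neq0] := eqVneq a' 0; first by rewrite mulr_ge0 // ltW // expR_gt0.
have [_|a_neq0] /= := eqVneq a 0; first by rewrite addey // leye_eq.
have a_gt0 : 0 < a by rewrite lt_def a_neq0 a_ge0.
have a'_gt0 : 0 < a' by rewrite lt_def a'_neq0 a'_ge0.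
rewrite -EFinD lee_fin => ln_le.
by rewrite -(lnK a'_gt0) -[X in _ * X](lnK a_gt0) -expRD ler_expR -lerBlDr.
Qed.

Section QuasiUniversal.
Variables (q eta g : R).
Hypotheses (eta_gt0 : 0 < eta) (eta_le : eta <= trR rho) (g01 : 0 < g < 1).
Hypothesis M_qu : quasiuniversal M q Gam.
Let eta_g := (1 - g) * eta + g * trR rho.

Lemma eta_g_gt0 : 0 < eta_g.
Proof.
case/andP: g01 => g_gt0 g_lt1.
have : 0 < (1 - g) * eta by rewrite mulr_gt0 // subr_gt0.
have : 0 <= g * trR rho by rewrite mulr_ge0 // ltW // (lt_le_trans eta_gt0).
rewrite /eta_g; lra.
Qed.

Lemma quasiuniversal_test (Q : mx) : effect Q -> eta_g <= trR (Q *m rho) ->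
  exists2 Q', Minf M Q' /\ eta <= trR (Q' *m rho) &
    trR (Q' *m Gam) <= expR q * (trR rho / eta_g) * trR (Q *m Gam) / g.
Proof.
move=> Q_effect eta_g_le; have /andP[g_gt0 g_lt1] := g01.
have trQ_gt0 : 0 < trR (Q *m rho) by apply: lt_le_trans eta_g_gt0 eta_g_le.
have [m [/andP[m_gt0 m_le1] Qm_effect Qm_norm Q_le_m]] := effect_normalize Q_effect trQ_gt0.
have [Qt [Qt' [Qt_Minf Qt'_Minf Qt_le Qt'_ge a'_le]]] := M_qu Qm_effect Qm_norm g01.
have [Qt_psd _] := Minf_effect M_effect Qt_Minf.
have [Qt'_psd _] := Minf_effect M_effect Qt'_Minf.
exists Qt'; first split => //.
  have := loewner_trR_mul Qt'_ge rho_psd.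
  rewrite trR_mulDl !trR_mulZl mul1mx => trQm_le.
  have trQ_le : trR (Q *m rho) <= m^-1 * trR (Q *m rho) by rewrite ler_peMl ?(ltW trQ_gt0) ?invf_ge1.
  have g1_gt0 : 0 < 1 - g by rewrite subr_gt0.
  rewrite -(ler_pM2l g1_gt0) -(lerD2r (g * trR rho)) -/eta_g.
  by rewrite (le_trans eta_g_le) // (le_trans trQ_le).
have a_le : trR (Qt *m Gam) <= m^-1 * trR (Q *m Gam) / g.
  have := loewner_trR_mul Qt_le Gam_psd; rewrite !trR_mulZl => Qt_le'.
  by rewrite ler_pdivlMr // mulrC.
have m_inv_le : m^-1 <= trR rho / eta_g.
  have := loewner_trR_mul Q_le_m rho_psd; rewrite trR_mulZl mul1mx => trQ_le.
  by rewrite ler_pdivlMr ?eta_g_gt0 // ler_pdivrMl // (le_trans eta_g_le).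
apply: le_trans (elog_sub_le (trR_psd_mul_ge0 Qt_psd Gam_psd) (trR_psd_mul_ge0 Qt'_psd Gam_psd) a'_le) _.
rewrite -!mulrA; apply: ler_wpM2l; first by rewrite ltW // expR_gt0.
apply: le_trans a_le _; rewrite !mulrA.
apply: ler_wpM2r; first by rewrite invr_ge0 ltW.
by apply: ler_wpM2r => //; apply: trR_psd_mul_ge0 Q_effect.1 Gam_psd.
Qed.

Lemma inf_DHinf_ratios_le (Q : mx) : effect Q -> eta_g <= trR (Q *m rho) ->
  inf (DHinf_ratios eta) <= expR q * (trR rho / (g * eta)) * (trR (Q *m Gam) / eta_g).
Proof.
move=> Q_effect eta_g_le; have /andP[g_gt0 _] := g01.
have [Q' [Q'_Minf eta_leQ'] Q'_le] := quasiuniversal_test Q_effect eta_g_le.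
have trQ'_gt0 : 0 < trR (Q' *m rho) by apply: lt_le_trans eta_leQ'.
apply: le_trans (_ : trR (Q' *m Gam) / trR (Q' *m rho) <= _).
  by apply: ge_inf; [exists 0; exact: DHinf_ratios_ge0 | exists Q'].
apply: le_trans (_ : trR (Q' *m Gam) / eta <= _).
  have [Q'_psd _] := Minf_effect M_effect Q'_Minf.
  by rewrite ler_wpM2l ?trR_psd_mul_ge0 // lef_pV2 // posrE.
have eta_inv_ge0 : 0 <= eta^-1 by rewrite invr_ge0 ltW.
apply: le_trans (ler_wpM2r eta_inv_ge0 Q'_le) _.
by rewrite le_eqVlt; apply/orP; left; apply/eqP; field; rewrite !gt_eqF ?eta_g_gt0.
Qed.

Lemma DH_sub_le_DHinf : M 0 1%:M ->
  (DH eta_g rho Gam - q%:E - (ln (trR rho / (g * eta)))%:E <= DHinf M eta rho Gam)%E.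
Proof.
move=> M0_1; have /andP[g_gt0 g_lt1] := g01.
have trrho_gt0 : 0 < trR rho by apply: lt_le_trans eta_le.
have eta_g_le : eta_g <= trR rho.
  have : (1 - g) * eta <= (1 - g) * trR rho by rewrite ler_wpM2l // subr_ge0 ltW.
  rewrite /eta_g; lra.
rewrite /DHinf /DH -/(DHinf_ratios eta) -/(DH_ratios eta_g).
set x := inf (DH_ratios _); set y := inf (DHinf_ratios _).
set L := trR rho / (g * eta).
have L_gt0 : 0 < L by rewrite divr_gt0 // mulr_gt0.
have CL_gt0 : 0 < expR q * L by rewrite mulr_gt0 // expR_gt0.
have y_ge0 : 0 <= y by apply: lb_le_inf; [exact: DHinf_ratios_neq0 | exact: DHinf_ratios_ge0].
have x_ge0 : 0 <= x by apply: lb_le_inf; [exact: DH_ratios_neq0 | exact: DH_ratios_ge0 eta_g_gt0].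
have y_le : y <= expR q * L * x.
  rewrite -ler_pdivrMl //; apply: lb_le_inf; first exact: DH_ratios_neq0.
  by move=> _ [Q [Q_effect Q_le] <-]; rewrite ler_pdivrMl // inf_DHinf_ratios_le.
rewrite /nlog; have [_|y_neq0] := eqVneq y 0; first by rewrite leey.
have y_gt0 : 0 < y by rewrite lt_def y_neq0 y_ge0.
have x_gt0 : 0 < x.
  rewrite lt_def x_ge0 andbT; apply/eqP => x0.
  by move: y_le; rewrite x0 mulr0 => /(lt_le_trans y_gt0); rewrite ltxx.
rewrite gt_eqF // -!EFinB lee_fin.
have : ln y <= ln (expR q * L * x) by rewrite ler_ln // posrE mulr_gt0.
clearbody L.
rewrite lnM ?posrE ?mulr_gt0 ?expR_gt0 // lnM ?posrE ?expR_gt0 // expRK.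
lra.
Qed.

End QuasiUniversal.
End HypothesisTesting.

Lemma lee_sub2_oppr (R : realType) (X Y : \bar R) (a b : R) :
  (X - a%:E - b%:E <= Y)%E -> (- Y <= - X + a%:E + b%:E)%E.
Proof.
case: X => [x| |]; case: Y => [y| |] //=; rewrite ?lee_fin ?leNye ?leey //.
by lra.
Qed.

Unset Implicit Arguments. Set Strict Implicit.

Theorem theoremI3 (R : realType) (n : nat) (M : R -> set 'M[R[i]]_n)
  (rho Gam : 'M[R[i]]_n) (q eta g : R) :
  (forall r : R, 0 <= r -> M r `<=` @effect R n) ->
  M 0 1%:M ->
  (forall r r' : R, 0 <= r -> r <= r' -> M r `<=` M r') ->
  subnormalized rho -> psd Gam ->
  0 <= q -> 0 < eta -> eta <= trR rho -> 0 < g < 1 ->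
  let eta_g := (1 - g) * eta + g * trR rho in
  (quasiuniversal M q Gam ->
     (DHinf M eta rho Gam <= DH eta rho Gam)%E /\
     (DH eta_g rho Gam - q%:E - (ln (trR rho / (g * eta)))%:E
        <= DHinf M eta rho Gam)%E) /\
  (quasiuniversal M q 1%:M ->
     (HH eta rho <= HHinf M eta rho)%E /\
     (HHinf M eta rho <= HH eta_g rho + q%:E + (ln (trR rho / (g * eta)))%:E)%E).
Proof.
move=> M_effect M0_1 _ [rho_psd _] Gam_psd _ eta_gt0 eta_le g01 eta_g; split.
  by move=> M_qu; split; [exact: DHinf_le_DH | exact: DH_sub_le_DHinf].
have one_psd := psd1 R n.
move=> M_qu; split; first by rewrite leeN2; exact: DHinf_le_DH.
by apply: lee_sub2_oppr; exact: DH_sub_le_DHinf.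
Qed.
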